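(* Let $(X,d_X)$ be an ultrametric space and $(Y,d_Y)$, $(Z,d_Z)$ be metric spaces. Let $f:X\to Y$ be a full function, let $L>0$, let $g:Y\to Z$ be Lipschitz with constant $L$ and $h:Z\to X$ be Lipschitz with constant $L$. Then $g\circ f$ is full, and if $d_Z$ is an ultrametric then $f\circ h$ is also full. The same holds with ''full'' replaced everywhere by ''$\omega$-full''.
   Context: For an ultrametric space $(W,d_W)$, a set $A\subseteq W$ is full with constant $r>0$ if $B(x,r)=\{y\in W:d_W(x,y)<r\}\subseteq A$ for every $x\in A$, and full if it is full with some constant. A function $f$ from an ultrametric space $W$ to a space $V$ is full if it takes finitely many values and the preimage of each value is a full set; it is $\omega$-full if it takes at most countably many values and there is a single $r>0$ such that the preimage of each value is full with constant $r$. A function $g:(Y,d_Y)\to(Z,d_Z)$ is Lipschitz with constant $L$ if $d_Z(g(y),g(y'))\le L\,d_Y(y,y')$ for all $y,y'$. *)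

From Stdlib Require Import Reals List.
Open Scope R_scope.

Definition is_metric {T : Type} (d : T -> T -> R) : Prop :=
  (forall x y, 0 <= d x y) /\
  (forall x y, d x y = 0 <-> x = y) /\
  (forall x y, d x y = d y x) /\
  (forall x y z, d x z <= d x y + d y z).

Definition is_ultrametric {T : Type} (d : T -> T -> R) : Prop :=
  is_metric d /\ (forall x y z, d x z <= Rmax (d x y) (d y z)).

Definition ball {T : Type} (d : T -> T -> R) (x : T) (r : R) : T -> Prop :=
  fun y => d x y < r.

Definition full_set_with {T : Type} (d : T -> T -> R) (A : T -> Prop) (r : R) : Prop :=
  0 < r /\ forall x, A x -> forall y, ball d x r y -> A y.

Definition full_set {T : Type} (d : T -> T -> R) (A : T -> Prop) : Prop :=
  exists r, full_set_with d A r.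

Definition preimage {T U : Type} (f : T -> U) (v : U) : T -> Prop :=
  fun x => f x = v.

Definition finitely_valued {T U : Type} (f : T -> U) : Prop :=
  exists l : list U, forall x, In (f x) l.

Definition countably_valued {T U : Type} (f : T -> U) : Prop :=
  exists c : U -> nat, forall x x', c (f x) = c (f x') -> f x = f x'.

Definition full_fun {T U : Type} (d : T -> T -> R) (f : T -> U) : Prop :=
  finitely_valued f /\ forall v : U, full_set d (preimage f v).

Definition omega_full_fun {T U : Type} (d : T -> T -> R) (f : T -> U) : Prop :=
  countably_valued f /\
  exists r, 0 < r /\ forall v : U, full_set_with d (preimage f v) r.

Definition lipschitz_with {T U : Type} (dT : T -> T -> R) (dU : U -> U -> R)
  (g : T -> U) (L : R) : Prop :=
  forall y y', dU (g y) (g y') <= L * dT y y'.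

From Stdlib Require Import Reals Lra List ClassicalEpsilon.
Open Scope R_scope.
Set Implicit Arguments.

(* All preimages of [f] are full with constant [r] exactly when [f] is constant
   on every ball of radius [r]; finitely many values let one pass from one
   constant per preimage to a common one (their minimum).  Postcomposing keeps
   [f] constant on the same balls, and an [L]-Lipschitz [h] maps balls of
   radius [r / L] into balls of radius [r]. *)

Definition constant_on_balls {T U : Type} (d : T -> T -> R) (f : T -> U) (r : R)
  : Prop :=
  forall x y, d x y < r -> f x = f y.

Section ConstantOnBalls.

Variables (T U : Type) (d : T -> T -> R) (f : T -> U).

Lemma preimages_full_with_iff (r : R) : 0 < r ->
  (forall v, full_set_with d (preimage f v) r) <-> constant_on_balls d f r.
Proof.
  intros Hr; split.
  - intros Hfull x y Hxy; symmetry; exact (proj2 (Hfull (f x)) x eq_refl y Hxy).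
  - intros Hc v; split; [exact Hr|].
    intros x Hx y Hy; unfold preimage in *; rewrite <- Hx; symmetry; exact (Hc x y Hy).
Qed.

Lemma full_preimages_uniform_constant :
  finitely_valued f -> (forall v, full_set d (preimage f v)) ->
  exists r, 0 < r /\ constant_on_balls d f r.
Proof.
  intros [l Hl] Hfull.
  assert (Hlist : exists r, 0 < r /\
            forall x y, In (f x) l -> d x y < r -> f x = f y).
  { clear Hl; induction l as [|v l IH].
    - exists 1; split; [lra | intros x y []].
    - destruct IH as [r [Hr IH]], (Hfull v) as [rv [Hrv Hv]].
      exists (Rmin r rv); split; [now apply Rmin_pos|].
      intros x y [Hxv | Hxl] Hxy.
      + rewrite <- Hxv; symmetry; apply (Hv x (eq_sym Hxv)).
        unfold ball; pose proof (Rmin_r r rv); lra.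
      + apply IH; [exact Hxl|]; pose proof (Rmin_l r rv); lra. }
  destruct Hlist as [r [Hr Hc]]; exists r; split; [exact Hr|].
  intros x y; apply Hc, Hl.
Qed.

Lemma constant_on_balls_comp (V : Type) (k : U -> V) (r : R) :
  constant_on_balls d f r -> constant_on_balls d (fun x => k (f x)) r.
Proof. intros Hc x y Hxy; now rewrite (Hc x y Hxy). Qed.

Lemma constant_on_balls_lipschitz_comp (S : Type) (dS : S -> S -> R)
    (h : S -> T) (L r : R) :
  0 < L -> lipschitz_with dS d h L -> constant_on_balls d f r ->
  constant_on_balls dS (fun z => f (h z)) (r / L).
Proof.
  intros HL Hh Hc z z' Hzz'; apply Hc.
  apply (Rle_lt_trans _ (L * dS z z')); [apply Hh|].
  replace r with (L * (r / L)) by (field; lra).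
  now apply Rmult_lt_compat_l.
Qed.

Lemma finitely_valued_comp (V : Type) (k : U -> V) :
  finitely_valued f -> finitely_valued (fun x => k (f x)).
Proof. intros [l Hl]; exists (map k l); intro x; apply in_map, Hl. Qed.

Lemma finitely_valued_precomp (S : Type) (h : S -> T) :
  finitely_valued f -> finitely_valued (fun z => f (h z)).
Proof. intros [l Hl]; exists l; intro z; apply Hl. Qed.

Lemma countably_valued_precomp (S : Type) (h : S -> T) :
  countably_valued f -> countably_valued (fun z => f (h z)).
Proof. intros [c Hc]; exists c; intros z z'; apply Hc. Qed.

(* A value [w] of [k ∘ f] is coded by the code of some [f x] with [k (f x) = w]. *)
Lemma countably_valued_comp (V : Type) (k : U -> V) :
  countably_valued f -> countably_valued (fun x => k (f x)).
Proof.
  intros [c Hc].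
  set (code w := epsilon (inhabits 0%nat)
                   (fun n => exists x, k (f x) = w /\ c (f x) = n)).
  assert (Hcode : forall x, exists x0, k (f x0) = k (f x) /\ c (f x0) = code (k (f x))).
  { intro x; apply (epsilon_spec (inhabits 0%nat)
      (fun n => exists x0, k (f x0) = k (f x) /\ c (f x0) = n)).
    now exists (c (f x)), x. }
  exists code; intros x x' Hxx'.
  destruct (Hcode x) as [x1 [E1 C1]], (Hcode x') as [x2 [E2 C2]].
  rewrite <- E1, <- E2; f_equal; apply Hc; congruence.
Qed.

Lemma full_fun_iff :
  full_fun d f <-> finitely_valued f /\ exists r, 0 < r /\ constant_on_balls d f r.
Proof.
  split.
  - intros [Hval Hfull]; split; [exact Hval|].
    exact (full_preimages_uniform_constant Hval Hfull).
  - intros [Hval [r [Hr Hc]]]; split; [exact Hval|].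
    intro v; exists r; exact (proj2 (preimages_full_with_iff Hr) Hc v).
Qed.

Lemma omega_full_fun_iff :
  omega_full_fun d f <-> countably_valued f /\ exists r, 0 < r /\ constant_on_balls d f r.
Proof.
  split; intros [Hval [r [Hr H]]]; split; try exact Hval; exists r; split; try exact Hr.
  - exact (proj1 (preimages_full_with_iff Hr) H).
  - exact (proj2 (preimages_full_with_iff Hr) H).
Qed.

End ConstantOnBalls.

Theorem mainTheorem9 (X Y Z : Type)
  (dX : X -> X -> R) (dY : Y -> Y -> R) (dZ : Z -> Z -> R)
  (hX : is_ultrametric dX) (hY : is_metric dY) (hZ : is_metric dZ)
  (f : X -> Y) (L : R) (g : Y -> Z) (h : Z -> X)
  (hL : 0 < L) (hg : lipschitz_with dY dZ g L) (hh : lipschitz_with dZ dX h L) :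
  (full_fun dX f ->
     full_fun dX (fun x => g (f x)) /\
     (is_ultrametric dZ -> full_fun dZ (fun z => f (h z)))) /\
  (omega_full_fun dX f ->
     omega_full_fun dX (fun x => g (f x)) /\
     (is_ultrametric dZ -> omega_full_fun dZ (fun z => f (h z)))).
Proof.
  split; intro Hf; [apply full_fun_iff in Hf | apply omega_full_fun_iff in Hf];
    destruct Hf as [Hval [r [Hr Hc]]]; split; [| intros _ | | intros _].
  - apply full_fun_iff; split; [now apply finitely_valued_comp|].
    exists r; split; [exact Hr | now apply constant_on_balls_comp].
  - apply full_fun_iff; split; [now apply finitely_valued_precomp|].
    exists (r / L); split; [now apply Rdiv_lt_0_compat|].
    exact (constant_on_balls_lipschitz_comp hL hh Hc).
  - apply omega_full_fun_iff; split; [now apply countably_valued_comp|].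
    exists r; split; [exact Hr | now apply constant_on_balls_comp].
  - apply omega_full_fun_iff; split; [now apply countably_valued_precomp|].
    exists (r / L); split; [now apply Rdiv_lt_0_compat|].
    exact (constant_on_balls_lipschitz_comp hL hh Hc).
Qed.
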